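(* Let $Y\subset\mathbb{R}^n$ be open, and let $\omega\colon Y\to\mathbb{R}^n$, $f\colon Y\to\mathbb{R}^n$, $F\colon Y\to\mathbb{R}$, $H\colon Y\to\mathbb{R}^{n\times m}$, $g\colon Y\to\mathbb{R}^m$, $g^{\mathrm{num}}\colon Y\times Y\to\mathbb{R}^m$, $f^{\mathrm{num}}\colon Y\times Y\to\mathbb{R}^n$ be arbitrary with $f^{\mathrm{num}}(u,u)=f(u)$, $g^{\mathrm{num}}(u,u)=g(u)$. Then the following are equivalent: (A) there exists $F^{\mathrm{num}}\colon Y\times Y\to\mathbb{R}$ with $F^{\mathrm{num}}(u,u)=F(u)$ such that for all $u_-,u_0,u_+\in Y$, $$\omega(u_0)\cdot\Big(f^{\mathrm{num}}(u_0,u_+)-f^{\mathrm{num}}(u_-,u_0)+H(u_0)g^{\mathrm{num}}(u_0,u_+)-H(u_0)g^{\mathrm{num}}(u_-,u_0)\Big)\ \ge\ F^{\mathrm{num}}(u_0,u_+)-F^{\mathrm{num}}(u_-,u_0);$$ (B) for all $u_-,u_+\in Y$, $$[\![\omega]\!]\cdot f^{\mathrm{num}}(u_-,u_+)+[\![\omega\cdot H]\!]\,g^{\mathrm{num}}(u_-,u_+)-[\![\omega\cdot Hg]\!]\ \le\ [\![\omega\cdot f-F]\!].$$ Moreover, there exists a consistent $F^{\mathrm{num}}$ with equality in (A) for all triples iff (B) holds with equality for all pairs, and then $$F^{\mathrm{num}}=\{\{F\}\}+\{\{\omega\}\}\cdot f^{\mathrm{num}}-\{\{\omega\cdot f\}\}-\{\{\omega\cdot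 Hg\}\}+\{\{\omega\cdot H\}\}\,g^{\mathrm{num}}.$$
   Context: For a function $a$ on $Y$ and states $u_\pm$: $\{\{a\}\}=\tfrac12(a(u_-)+a(u_+))$, $[\![a]\!]=a(u_+)-a(u_-)$; $\omega\cdot H=\omega^TH\in\mathbb{R}^{1\times m}$ and $\omega\cdot Hg=\omega^THg\in\mathbb{R}$; numerical fluxes are evaluated at $(u_-,u_+)$. *)

From HB Require Import structures.
From mathcomp Require Import all_boot all_order all_algebra.
From mathcomp Require Import all_classical all_reals all_analysis.
Set Implicit Arguments. Unset Strict Implicit. Unset Printing Implicit Defensive.
Import Order.TTheory GRing.Theory Num.Theory.
Import numFieldNormedType.Exports.
Local Open Scope ring_scope.

Definition dotv (R : realType) (n : nat) (a b : 'cV[R]_n) : R := (a^T *m b) 0 0.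

Definition dotH (R : realType) (n m : nat) (w : 'cV[R]_n) (H : 'M[R]_(n, m))
  : 'rV[R]_m := w^T *m H.

Definition rvapp (R : realType) (m : nat) (r : 'rV[R]_m) (v : 'cV[R]_m) : R :=
  (r *m v) 0 0.

Definition jump (R : realType) (V : lmodType R) (Y : Type) (a : Y -> V) (um up : Y) : V :=
  a up - a um.
Definition avg (R : realType) (V : lmodType R) (Y : Type) (a : Y -> V) (um up : Y) : V :=
  (2 : R)^-1 *: (a um + a up).

From HB Require Import structures.
From mathcomp Require Import all_boot all_order all_algebra.
From mathcomp Require Import all_classical all_reals all_analysis.
Import Order.TTheory GRing.Theory Num.Theory.
Import numFieldNormedType.Exports.
From mathcomp Require Import lra.
Set Implicit Arguments. Unset Strict Implicit. Unset Printing Implicit Defensive.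
Local Open Scope ring_scope.
Local Open Scope classical_set_scope.

(* Pair the numerical flux at an interface (x, y) with the entropy variable of
   the left state x (phi) and of the right state y (psi); both reduce to
   c := omega . (f + H g) on the diagonal, and condition (A) for the triple
   (u-, u0, u+) reads  Fnum(u0,u+) - Fnum(u-,u0) <= phi(u0,u+) - psi(u-,u0).
   Taking u0 = u- and u0 = u+ and adding the two inequalities eliminates
   Fnum(u-,u+) and leaves the jump condition (B); conversely (B) makes
   Fnum(x,y) := phi(x,y) - c(x) + F(x) satisfy (A). In the exact case both
   choices of u0 determine Fnum(u-,u+), and averaging them gives the formula. *)

Section EntropyFluxPotential.
Variables (R : realType) (T : Type) (Y : set T).
Variables (phi psi : T -> T -> R) (c F : T -> R).

Definition ineq (exact : bool) (x y : R) : Prop := if exact then x = y else x <= y.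

Lemma ineq_shift exact (x y x' y' : R) :
  y - x = y' - x' -> ineq exact x y <-> ineq exact x' y'.
Proof. by case: exact => /= shift; split => ?; lra. Qed.

Definition flux_potential_cond (exact : bool) (Fn : T -> T -> R) :=
  (forall u, Y u -> Fn u u = F u) /\
  forall um u0 up, Y um -> Y u0 -> Y up ->
    ineq exact (Fn u0 up - Fn um u0) (phi u0 up - psi um u0).

Definition jump_cond (exact : bool) :=
  forall um up, Y um -> Y up ->
    ineq exact (psi um up - phi um up) (c up - F up - (c um - F um)).

Definition flux_potential (x y : T) : R := phi x y - c x + F x.

Hypothesis phi_diag : forall u, Y u -> phi u u = c u.
Hypothesis psi_diag : forall u, Y u -> psi u u = c u.

Lemma jump_cond_of_flux_potential exact Fn :
  flux_potential_cond exact Fn -> jump_cond exact.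
Proof.
move=> [Fn_diag Fn_step] um up Yum Yup.
move: (Fn_step um up up Yum Yup Yup) (Fn_step um um up Yum Yum Yup).
by rewrite !Fn_diag // phi_diag // psi_diag //; case: exact {Fn_step} => /=; lra.
Qed.

Lemma flux_potential_cond_of_jump exact :
  jump_cond exact -> flux_potential_cond exact flux_potential.
Proof.
move=> jump_exact; split => [u Yu | um u0 up Yum Yu0 Yup].
  by rewrite /flux_potential phi_diag // subrr add0r.
move: (jump_exact um u0 Yum Yu0); rewrite /flux_potential.
by case: exact {jump_exact} => /=; lra.
Qed.

Lemma flux_potential_avg Fn : flux_potential_cond true Fn ->
  forall um up, Y um -> Y up ->
  Fn um up = (F um + F up) / 2 + (phi um up + psi um up) / 2 - (c um + c up) / 2.
Proof.
move=> [Fn_diag Fn_step] um up Yum Yup.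
have := Fn_step um up up Yum Yup Yup; have := Fn_step um um up Yum Yum Yup.
by rewrite /= !Fn_diag // phi_diag // psi_diag //; lra.
Qed.

End EntropyFluxPotential.

Section Bilinear.
Variables (R : realType) (n m : nat).

Lemma dotvDl (a b c : 'cV[R]_n) : dotv (a + b) c = dotv a c + dotv b c.
Proof. by rewrite /dotv linearD mulmxDl mxE. Qed.

Lemma dotvBl (a b c : 'cV[R]_n) : dotv (a - b) c = dotv a c - dotv b c.
Proof. by rewrite /dotv linearB mulmxBl !mxE. Qed.

Lemma dotvZl (k : R) (a c : 'cV[R]_n) : dotv (k *: a) c = k * dotv a c.
Proof. by rewrite /dotv linearZ -scalemxAl mxE. Qed.

Lemma dotvDr (a b c : 'cV[R]_n) : dotv c (a + b) = dotv c a + dotv c b.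
Proof. by rewrite /dotv mulmxDr mxE. Qed.

Lemma dotvBr (a b c : 'cV[R]_n) : dotv c (a - b) = dotv c a - dotv c b.
Proof. by rewrite /dotv mulmxBr !mxE. Qed.

Lemma dotv_mulmx (c : 'cV[R]_n) (M : 'M[R]_(n, m)) (v : 'cV[R]_m) :
  dotv c (M *m v) = rvapp (dotH c M) v.
Proof. by rewrite /dotv /rvapp /dotH mulmxA. Qed.

Lemma rvappDl (r s : 'rV[R]_m) (v : 'cV[R]_m) : rvapp (r + s) v = rvapp r v + rvapp s v.
Proof. by rewrite /rvapp mulmxDl mxE. Qed.

Lemma rvappBl (r s : 'rV[R]_m) (v : 'cV[R]_m) : rvapp (r - s) v = rvapp r v - rvapp s v.
Proof. by rewrite /rvapp mulmxBl !mxE. Qed.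

Lemma rvappZl (k : R) (r : 'rV[R]_m) (v : 'cV[R]_m) : rvapp (k *: r) v = k * rvapp r v.
Proof. by rewrite /rvapp -scalemxAl mxE. Qed.

End Bilinear.

Section NumericalFluxes.
Variables (R : realType) (n m : nat).
Variables (omega f : 'cV[R]_n -> 'cV[R]_n) (F : 'cV[R]_n -> R).
Variables (H : 'cV[R]_n -> 'M[R]_(n, m)) (g : 'cV[R]_n -> 'cV[R]_m).
Variables (fnum : 'cV[R]_n -> 'cV[R]_n -> 'cV[R]_n).
Variables (gnum : 'cV[R]_n -> 'cV[R]_n -> 'cV[R]_m).

Definition flux_left (x y : 'cV[R]_n) : R :=
  dotv (omega x) (fnum x y + H x *m gnum x y).
Definition flux_right (x y : 'cV[R]_n) : R :=
  dotv (omega y) (fnum x y + H y *m gnum x y).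
Definition flux_diag (u : 'cV[R]_n) : R := dotv (omega u) (f u + H u *m g u).

Lemma dotv_cell_flux um u0 up :
  dotv (omega u0) (fnum u0 up - fnum um u0 + H u0 *m gnum u0 up - H u0 *m gnum um u0)
  = flux_left u0 up - flux_right um u0.
Proof. by rewrite -addrA addrACA -opprD dotvBr. Qed.

Lemma jump_entropy_balanceE um up :
  jump (fun u => dotv (omega u) (f u) - F u) um up
  - (dotv (jump omega um up) (fnum um up)
     + rvapp (jump (fun u => dotH (omega u) (H u)) um up) (gnum um up)
     - jump (fun u => rvapp (dotH (omega u) (H u)) (g u)) um up)
  = flux_diag up - F up - (flux_diag um - F um)
    - (flux_right um up - flux_left um up).
Proof.
rewrite /jump /flux_left /flux_right /flux_diag dotvBl rvappBl.
by rewrite !dotvDr !dotv_mulmx; lra.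
Qed.

Lemma avg_flux_potentialE um up :
  avg F um up
  + dotv (avg omega um up) (fnum um up)
  - avg (fun u => dotv (omega u) (f u)) um up
  - avg (fun u => rvapp (dotH (omega u) (H u)) (g u)) um up
  + rvapp (avg (fun u => dotH (omega u) (H u)) um up) (gnum um up)
  = (F um + F up) / 2 + (flux_left um up + flux_right um up) / 2
    - (flux_diag um + flux_diag up) / 2.
Proof.
rewrite /avg dotvZl dotvDl rvappZl rvappDl /flux_left /flux_right /flux_diag.
by rewrite !dotvDr !dotv_mulmx /GRing.scale /=; lra.
Qed.

End NumericalFluxes.

Theorem mainTheorem5 (R : realType) (n m : nat) (Y : set 'cV[R]_n)
  (omega f : 'cV[R]_n -> 'cV[R]_n) (F : 'cV[R]_n -> R)
  (H : 'cV[R]_n -> 'M[R]_(n, m)) (g : 'cV[R]_n -> 'cV[R]_m)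
  (gnum : 'cV[R]_n -> 'cV[R]_n -> 'cV[R]_m)
  (fnum : 'cV[R]_n -> 'cV[R]_n -> 'cV[R]_n) :
  open Y ->
  (forall u, Y u -> fnum u u = f u) ->
  (forall u, Y u -> gnum u u = g u) ->
  let condA (Fnum : 'cV[R]_n -> 'cV[R]_n -> R) (eq : bool) :=
    (forall u, Y u -> Fnum u u = F u) /\
    (forall um u0 up, Y um -> Y u0 -> Y up ->
       let lhs := dotv (omega u0)
         (fnum u0 up - fnum um u0 + H u0 *m gnum u0 up - H u0 *m gnum um u0) in
       let rhs := Fnum u0 up - Fnum um u0 in
       if eq then lhs = rhs else rhs <= lhs) in
  let lhsB (um up : 'cV[R]_n) :=
    dotv (jump omega um up) (fnum um up)
    + rvapp (jump (fun u => dotH (omega u) (H u)) um up) (gnum um up)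
    - jump (fun u => rvapp (dotH (omega u) (H u)) (g u)) um up in
  let rhsB (um up : 'cV[R]_n) :=
    jump (fun u => dotv (omega u) (f u) - F u) um up in
  ((exists Fnum, condA Fnum false) <->
     (forall um up, Y um -> Y up -> lhsB um up <= rhsB um up)) /\
  ((exists Fnum, condA Fnum true) <->
     (forall um up, Y um -> Y up -> lhsB um up = rhsB um up)) /\
  (forall Fnum, condA Fnum true ->
     forall um up, Y um -> Y up ->
       Fnum um up =
         avg F um up
         + dotv (avg omega um up) (fnum um up)
         - avg (fun u => dotv (omega u) (f u)) um up
         - avg (fun u => rvapp (dotH (omega u) (H u)) (g u)) um up
         + rvapp (avg (fun u => dotH (omega u) (H u)) um up) (gnum um up)).
Proof.
move=> _ fnum_diag gnum_diag condA lhsB rhsB.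
pose phi := flux_left omega H fnum gnum; pose psi := flux_right omega H fnum gnum.
pose c := flux_diag omega f H g.
have phi_diag u : Y u -> phi u u = c u.
  by move=> Yu; rewrite /phi /flux_left fnum_diag // gnum_diag.
have psi_diag u : Y u -> psi u u = c u.
  by move=> Yu; rewrite /psi /flux_right fnum_diag // gnum_diag.
have condAE exact Fn : condA Fn exact <-> flux_potential_cond Y phi psi F exact Fn.
  split=> -[Fn_diag Fn_step]; split=> // um u0 up Yum Yu0 Yup;
    move: (Fn_step um u0 up Yum Yu0 Yup); rewrite /= dotv_cell_flux;
    by case: exact {Fn_step} => /=.
have jumpBE exact um up : ineq exact (lhsB um up) (rhsB um up) <->
    ineq exact (psi um up - phi um up) (c up - F up - (c um - F um)).
  by apply: ineq_shift; rewrite jump_entropy_balanceE.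
have existsAE exact : (exists Fn, condA Fn exact) <->
    (forall um up, Y um -> Y up -> ineq exact (lhsB um up) (rhsB um up)).
  split=> [[Fn /condAE /(jump_cond_of_flux_potential phi_diag psi_diag) jump] | jumpB].
    by move=> um up Yum Yup; apply/jumpBE/jump.
  exists (flux_potential phi c F); apply/condAE/flux_potential_cond_of_jump => // um up Yum Yup.
  exact/jumpBE/jumpB.
split; [exact: existsAE | split; first exact: existsAE].
move=> Fn /condAE Fn_exact um up Yum Yup.
by rewrite avg_flux_potentialE; apply: (flux_potential_avg phi_diag psi_diag Fn_exact).
Qed.
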